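(* Let $G$ be a group of finite Morley rank whose Sylow $2$-subgroup is central. If $a,b\in G$ satisfy $a^b=a^{-1}$, then $a^2=1$.
   Context: $a^b=b^{-1}ab$. The hypothesis means that the Sylow $2$-subgroup (maximal $2$-subgroup) of $G$ is contained in $Z(G)$. *)

From Stdlib Require Import Arith.



Record gstruct := GStruct {
  gcar :> Type;
  gmul : gcar -> gcar -> gcar;
  ginv : gcar -> gcar;
  gone : gcar }.

Inductive gterm :=
  | tvar (n : nat)
  | tone
  | tmul (s t : gterm)
  | tinv (t : gterm).

Inductive gform :=
  | feq (s t : gterm)
  | fneg (f : gform)
  | fand (f g : gform)
  | fex (n : nat) (f : gform).   (* exists x_n, f *)

Definition upd (M : Type) (v : nat -> M) (n : nat) (x : M) : nat -> M :=
  fun m => if Nat.eqb m n then x else v m.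

Fixpoint eval (M : gstruct) (v : nat -> M) (t : gterm) : M :=
  match t with
  | tvar n => v n
  | tone => gone M
  | tmul s u => gmul M (eval M v s) (eval M v u)
  | tinv s => ginv M (eval M v s)
  end.

Fixpoint sat (M : gstruct) (v : nat -> M) (f : gform) : Prop :=
  match f with
  | feq s t => eval M v s = eval M v t
  | fneg g => ~ sat M v g
  | fand g h => sat M v g /\ sat M v h
  | fex n g => exists x : M, sat M (upd M v n x) g
  end.

Definition elem_emb (M N : gstruct) (e : M -> N) : Prop :=
  forall (f : gform) (v : nat -> M), sat M v f <-> sat N (fun n => e (v n)) f.

(* A definable subset of M (in the free variable x_0), with parameters:
   a formula together with an assignment of the remaining variables. *)
Definition dset (M : gstruct) : Type := (gform * (nat -> M))%type.

Definition dmem (M : gstruct) (d : dset M) (x : M) : Prop :=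
  sat M (upd M (snd d) 0 x) (fst d).

Fixpoint rk_ge (n : nat) (M : gstruct) (d : dset M) : Prop :=
  match n with
  | 0 => exists x : M, dmem M d x
  | S n' =>
      exists (N : gstruct) (e : M -> N), elem_emb M N e /\
      exists ds : nat -> dset N,
        (forall i x, dmem N (ds i) x -> dmem N (fst d, fun k => e (snd d k)) x) /\
        (forall i j x, i <> j -> dmem N (ds i) x -> dmem N (ds j) x -> False) /\
        (forall i, rk_ge n' N (ds i))
  end.

Definition finite_morley_rank (M : gstruct) : Prop :=
  exists n : nat, ~ rk_ge (S n) M (feq (tvar 0) (tvar 0), fun _ => gone M).

Section GroupNotions.
Variables (T : Type) (mul : T -> T -> T) (inv : T -> T) (one : T).

Definition is_group : Prop :=
  (forall x y z, mul x (mul y z) = mul (mul x y) z) /\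
  (forall x, mul one x = x) /\ (forall x, mul x one = x) /\
  (forall x, mul (inv x) x = one) /\ (forall x, mul x (inv x) = one).

Fixpoint gpow (x : T) (k : nat) : T :=
  match k with 0 => one | S k' => mul x (gpow x k') end.

Definition conjg (a b : T) : T := mul (inv b) (mul a b).

Definition is_subgroup (S : T -> Prop) : Prop :=
  S one /\ (forall x y, S x -> S y -> S (mul x y)) /\ (forall x, S x -> S (inv x)).

Definition is_2subgroup (S : T -> Prop) : Prop :=
  is_subgroup S /\ forall x, S x -> exists k, gpow x (2 ^ k) = one.

Definition is_sylow2 (S : T -> Prop) : Prop :=
  is_2subgroup S /\
  forall S', is_2subgroup S' -> (forall x, S x -> S' x) -> forall x, S' x -> S x.

Definition central (x : T) : Prop := forall g, mul x g = mul g x.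

End GroupNotions.

(* Let A be the centre of C(a, b): an abelian definable subgroup, containing b^2
   because b inverts a.  The subgroups A^(2^k) form a descending chain of definable
   subgroups, which must stabilise in a group of finite Morley rank: otherwise the
   cosets of the chain split each coset into infinitely many disjoint cosets at
   every depth, so the group has infinite rank.  If A^(2^k) = A^(2^(k+1)), write
   (b^2)^(2^k) = z^(2^(k+1)) with z in A; then t = b z^-1 is a 2-element that still
   inverts a.  By Zorn's lemma t lies in a Sylow 2-subgroup, so t is central and
   a = a^-1. *)

From Stdlib Require Import Arith Lia Classical ClassicalEpsilon.
From mathcomp Require classical_sets.

Set Bullet Behavior "Strict Subproofs".

Definition fcomm (s t : gterm) : gform := feq (tmul s t) (tmul t s).

Fixpoint pow_term (t : gterm) (n : nat) : gterm :=
  match n with 0 => tone | S n' => tmul t (pow_term t n') end.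

(* Variables: [x_1 = a], [x_2 = b], [x_5 = g]; [x_3] is the element of the
   centre of [C(a, b)] whose [2^k]-th power translates [g] to [x_0]. *)
Definition center_cent2_form : gform :=
  fand (fcomm (tvar 3) (tvar 1)) (fand (fcomm (tvar 3) (tvar 2))
   (fneg (fex 4 (fand (fcomm (tvar 4) (tvar 1)) (fand (fcomm (tvar 4) (tvar 2))
      (fneg (fcomm (tvar 3) (tvar 4)))))))).

Definition power_coset_form (k : nat) : gform :=
  fex 3 (fand center_cent2_form (feq (tvar 0) (tmul (tvar 5) (pow_term (tvar 3) (2 ^ k))))).

Lemma eval_pow_term (M : gstruct) v t n :
  eval M v (pow_term t n) = gpow M (gmul M) (gone M) (eval M v t) n.
Proof. induction n as [|n IHn]; simpl; now rewrite ?IHn. Qed.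

Section Group.
Variables (T : Type) (mul : T -> T -> T) (inv : T -> T) (one : T).
Hypothesis HG : is_group T mul inv one.

Local Infix "**" := mul (at level 40, left associativity).
Local Notation "x ^-1" := (inv x) (at level 3, left associativity, format "x ^-1").
Local Notation "x ^+ n" := (gpow T mul one x n) (at level 29, left associativity).

Lemma mulgA x y z : x ** (y ** z) = x ** y ** z. Proof. apply HG. Qed.
Lemma mul1g x : one ** x = x. Proof. apply HG. Qed.
Lemma mulg1 x : x ** one = x. Proof. apply HG. Qed.
Lemma mulVg x : x^-1 ** x = one. Proof. apply HG. Qed.
Lemma mulgV x : x ** x^-1 = one. Proof. apply HG. Qed.

Lemma mulgI x y z : x ** y = x ** z -> y = z.
Proof. intros e. rewrite <- (mul1g y), <- (mul1g z), <- (mulVg x), <- !mulgA, e. reflexivity. Qed.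

Lemma invg_unique x y : y ** x = one -> y = x^-1.
Proof. intros e. rewrite <- (mulg1 y), <- (mulgV x), mulgA, e, mul1g. reflexivity. Qed.

Lemma invgK x : x^-1^-1 = x.
Proof. symmetry. apply invg_unique, mulgV. Qed.

Lemma invgM x y : (x ** y)^-1 = y^-1 ** x^-1.
Proof. symmetry. apply invg_unique. rewrite mulgA, <- (mulgA _ _ x), mulVg, mulg1, mulVg. reflexivity. Qed.

Lemma commuteV x y : x ** y = y ** x -> x^-1 ** y = y ** x^-1.
Proof.
  intros e. apply (mulgI x). rewrite mulgA, mulgV, mul1g, mulgA, e, <- mulgA, mulgV, mulg1.
  reflexivity.
Qed.

Lemma expgD x m n : x ^+ (m + n) = x ^+ m ** x ^+ n.
Proof. induction m as [|m IHm]; simpl. - now rewrite mul1g. - now rewrite IHm, mulgA. Qed.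

Lemma expgM x m n : x ^+ (m * n) = x ^+ m ^+ n.
Proof.
  induction n as [|n IHn]. - now rewrite Nat.mul_0_r.
  - now rewrite Nat.mul_succ_r, Nat.add_comm, expgD, IHn.
Qed.

Lemma expg1n n : one ^+ n = one.
Proof. induction n as [|n IHn]; simpl. - reflexivity. - now rewrite IHn, mul1g. Qed.

Lemma commuteX x y n : x ** y = y ** x -> x ^+ n ** y = y ** x ^+ n.
Proof.
  intros e. induction n as [|n IHn]; simpl. - now rewrite mul1g, mulg1.
  - now rewrite <- mulgA, IHn, !mulgA, e.
Qed.

Lemma expgMn x y n : x ** y = y ** x -> (x ** y) ^+ n = x ^+ n ** y ^+ n.
Proof.
  intros e. induction n as [|n IHn]; simpl. - now rewrite mul1g.
  - rewrite IHn, <- !mulgA. f_equal. rewrite !mulgA. f_equal.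
    symmetry. now apply commuteX.
Qed.

Lemma expgVn x n : x^-1 ^+ n = (x ^+ n)^-1.
Proof.
  apply invg_unique. rewrite <- expgMn by now rewrite mulVg, mulgV.
  rewrite mulVg. apply expg1n.
Qed.

Lemma expg2S x k : x ^+ (2 ^ S k) = (x ** x) ^+ (2 ^ k).
Proof. rewrite Nat.pow_succ_r', expgM. simpl. now rewrite mulg1. Qed.

Lemma cycle_two_subgroup t N : t ^+ (2 ^ N) = one ->
  is_2subgroup T mul inv one (fun x => exists i, x = t ^+ i).
Proof.
  intros tN.
  assert (ord : forall i, t ^+ (2 ^ N * i) = one) by (intros i; now rewrite expgM, tN, expg1n).
  assert (pos : 2 ^ N <> 0) by (apply Nat.pow_nonzero; discriminate).
  split; [split; [|split]|].
  - now exists 0.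
  - intros x y [i ->] [j ->]. exists (i + j). now rewrite expgD.
  - intros x [i ->]. exists (i * (2 ^ N - 1)). symmetry. apply invg_unique.
    rewrite <- expgD. replace (i * (2 ^ N - 1) + i) with (2 ^ N * i) by nia. apply ord.
  - intros x [i ->]. exists N. now rewrite <- expgM, Nat.mul_comm.
Qed.

Lemma two_element_in_sylow2 t N : t ^+ (2 ^ N) = one ->
  exists S, is_sylow2 T mul inv one S /\ S t.
Proof.
  intros tN.
  (* [Zorn_bigcup] also needs [P] of the union of the empty chain. *)
  pose (P := fun S : T -> Prop =>
    (is_2subgroup T mul inv one S /\ S t) \/ forall x, ~ S x).
  destruct (@classical_sets.Zorn_bigcup T P) as [S [PS Smax]].
  - intros F FP Ftot.
    destruct (classic (exists X, F X /\ exists x, X x)) as [[X [FX [x Xx]]]|Fempty].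
    2:{ right. intros x [Y FY Yx]. apply Fempty. eauto. }
    assert (FS : forall Y y, F Y -> Y y -> is_2subgroup T mul inv one Y /\ Y t).
    { intros Y y FY Yy. destruct (FP Y FY) as [HY|Y0]; [exact HY|now destruct (Y0 y)]. }
    left. split; [split; [split; [|split]|]|].
    + exists X; [exact FX|]. apply (FS X x FX Xx).
    + intros y z [Y FY Yy] [Z FZ Zz].
      destruct (Ftot Y Z FY FZ) as [YZ|ZY].
      * exists Z; [exact FZ|]. apply (FS Z z FZ Zz); auto.
      * exists Y; [exact FY|]. apply (FS Y y FY Yy); auto.
    + intros y [Y FY Yy]. exists Y; [exact FY|]. apply (FS Y y FY Yy), Yy.
    + intros y [Y FY Yy]. apply (FS Y y FY Yy), Yy.
    + exists X; [exact FX|]. apply (FS X x FX Xx).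
  - destruct PS as [PS|S0].
    + exists S. split; [|apply PS]. split; [apply PS|].
      intros S' S'2 SS' x S'x. apply NNPP. intros Sx.
      apply (Smax S').
      * split; [exact SS'|]. intros S'S. now apply Sx, S'S.
      * left. split; [exact S'2|apply SS', PS].
    + exfalso. apply (Smax (fun x => exists i, x = t ^+ i)).
      * split. intros y Sy. now destruct (S0 y). intros all. apply (S0 one), all. now exists 0.
      * left. split. now apply (cycle_two_subgroup t N). exists 1. simpl. now rewrite mulg1.
Qed.

Lemma sqr_eq1_inverted_by_central a t :
  central T mul t -> conjg T mul inv a t = a^-1 -> a ** a = one.
Proof.
  intros t_central t_inverts_a. unfold conjg in t_inverts_a.
  rewrite <- (t_central a), mulgA, mulVg, mul1g in t_inverts_a.
  rewrite t_inverts_a at 2. apply mulgV.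
Qed.

Section AbelianPowers.
Variable A : T -> Prop.
Hypothesis A_subgroup : is_subgroup T mul inv one A.
Hypothesis A_abelian : forall x y, A x -> A y -> x ** y = y ** x.

Definition powers (n : nat) (x : T) : Prop := exists w, A w /\ x = w ^+ n.

Lemma powers_subgroup n : is_subgroup T mul inv one (powers n).
Proof.
  destruct A_subgroup as [A1 [AM AV]].
  split; [|split].
  - exists one. split; [exact A1|]. now rewrite expg1n.
  - intros x y [w [Aw ->]] [u [Au ->]]. exists (w ** u).
    split; [now apply AM|]. symmetry. now apply expgMn, A_abelian.
  - intros x [w [Aw ->]]. exists w^-1. split; [now apply AV|]. symmetry. apply expgVn.
Qed.

Lemma powers2S k x : powers (2 ^ S k) x -> powers (2 ^ k) x.
Proof.
  intros [w [Aw ->]]. exists (w ** w). split.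
  - now apply A_subgroup.
  - apply expg2S.
Qed.

End AbelianPowers.

Section DescendingChain.
Let M := GStruct T mul inv one.
Variable H : nat -> T -> Prop.
Hypothesis H_subgroup : forall k, is_subgroup T mul inv one (H k).
Hypothesis H_decr : forall k x, H (S k) x -> H k x.
Variable coset : nat -> T -> dset M.
Hypothesis dmem_coset : forall k g x, dmem M (coset k g) x <-> exists h, H k h /\ x = g ** h.

Lemma H_le k m x : k <= m -> H m x -> H k x.
Proof. induction 1; auto. Qed.

Lemma rk_ge_coset_strict_chain :
  (forall k, exists g, H k g /\ ~ H (S k) g) -> forall n k g, rk_ge n M (coset k g).
Proof.
  intros strict n. induction n as [|n IHn]; intros k g.
  - exists g. apply dmem_coset. exists one. split; [apply H_subgroup|]. now rewrite mulg1.
  - destruct (choice (fun j f => H (k + j) f /\ ~ H (S (k + j)) f)) as [f hf].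
    { intros j. apply strict. }
    exists M, (fun x => x). split; [intros f' v; reflexivity|].
    exists (fun j => coset (S (k + j)) (g ** f j)). split; [|split].
    + intros i x hx. change (dmem M (fst (coset k g), snd (coset k g)) x).
      rewrite <- surjective_pairing. apply dmem_coset in hx as [h [Hh ->]].
      apply dmem_coset. exists (f i ** h). split; [|symmetry; apply mulgA].
      apply H_subgroup.
      * apply (H_le _ (k + i)); [lia|apply hf].
      * apply (H_le _ (S (k + i))); [lia|exact Hh].
    + assert (sep : forall i j h h', i < j -> H (S (k + i)) h -> H (S (k + j)) h' ->
                    f i ** h = f j ** h' -> False).
      { intros i j h h' ij Hh Hh' e. apply (proj2 (hf i)).
        replace (f i) with (f j ** h' ** h^-1)
          by now rewrite <- e, <- mulgA, mulgV, mulg1.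
        apply H_subgroup; [apply H_subgroup|apply H_subgroup, Hh].
        - apply (H_le _ (k + j)); [lia|apply hf].
        - apply (H_le _ (S (k + j))); [lia|exact Hh']. }
      intros i j x ij hi hj.
      apply dmem_coset in hi as [h [Hh ->]]. apply dmem_coset in hj as [h' [Hh' e]].
      rewrite <- !mulgA in e. apply mulgI in e.
      destruct (Nat.lt_trichotomy i j) as [lt|[eq|gt]].
      * exact (sep i j h h' lt Hh Hh' e).
      * exact (ij eq).
      * exact (sep j i h' h gt Hh' Hh (eq_sym e)).
    + intros i. apply IHn.
Qed.

Lemma rk_ge_full n d v : rk_ge n M d -> rk_ge n M (feq (tvar 0) (tvar 0), v).
Proof.
  destruct n as [|n].
  - intros [x _]. now exists x.
  - intros [N [e [emb [ds [_ [disj rk]]]]]].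
    exists N, e. split; [exact emb|]. exists ds. split; [|split]; auto.
    intros; reflexivity.
Qed.

Lemma fmr_chain_stabilizes : finite_morley_rank M -> exists k, forall x, H k x -> H (S k) x.
Proof.
  intros [n rkM]. apply NNPP. intros unstable. apply rkM.
  apply (rk_ge_full _ (coset 0 one)), rk_ge_coset_strict_chain.
  intros k. apply NNPP. intros stable. apply unstable. exists k. intros x Hx.
  apply NNPP. intros Hx'. apply stable. now exists x.
Qed.

End DescendingChain.

Section Inversion.
Variables a b : T.
Let M := GStruct T mul inv one.

Definition coset_env (g : T) (n : nat) : T := match n with 1 => a | 2 => b | _ => g end.

Definition center_cent2 (w : T) : Prop :=
  w ** a = a ** w /\ w ** b = b ** w /\
  forall y, y ** a = a ** y -> y ** b = b ** y -> w ** y = y ** w.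

Lemma center_cent2_subgroup : is_subgroup T mul inv one center_cent2.
Proof.
  split; [|split].
  - split; [|split]; intros; now rewrite ?mul1g, ?mulg1.
  - intros x y [xa [xb xC]] [ya [yb yC]]. split; [|split].
    + now rewrite <- mulgA, ya, !mulgA, xa.
    + now rewrite <- mulgA, yb, !mulgA, xb.
    + intros z za zb. now rewrite <- mulgA, (yC z za zb), !mulgA, (xC z za zb).
  - intros x [xa [xb xC]]. split; [|split]; try now apply commuteV.
    intros z za zb. now apply commuteV, xC.
Qed.

Lemma center_cent2_abelian x y : center_cent2 x -> center_cent2 y -> x ** y = y ** x.
Proof. intros [_ [_ xC]] [ya [yb _]]. now apply xC. Qed.

Lemma dmem_power_coset k g x :
  dmem M (power_coset_form k, coset_env g) x <->
  exists h, powers center_cent2 (2 ^ k) h /\ x = g ** h.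
Proof.
  unfold dmem, power_coset_form, center_cent2_form, fcomm. simpl.
  setoid_rewrite eval_pow_term. unfold upd, coset_env. simpl. split.
  - intros [w [[wa [wb wC]] ->]]. exists (w ^+ (2 ^ k)). split; [|reflexivity].
    exists w. split; [|reflexivity]. split; [|split]; auto.
    intros y ya yb. apply NNPP. intros wy. apply wC. now exists y.
  - intros [h [[w [[wa [wb wC]] ->]] ->]]. exists w. split; [|reflexivity].
    split; [|split]; auto. intros [y [ya [yb wy]]]. now apply wy, wC.
Qed.

Lemma center_cent2_powers_stabilize : finite_morley_rank M ->
  exists k, forall x, powers center_cent2 (2 ^ k) x -> powers center_cent2 (2 ^ S k) x.
Proof.
  apply (fmr_chain_stabilizes (fun k => powers center_cent2 (2 ^ k)))
    with (coset := fun k g => (power_coset_form k, coset_env g)).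
  - intros k. exact (powers_subgroup _ center_cent2_subgroup center_cent2_abelian _).
  - intros k. apply powers2S, center_cent2_subgroup.
  - apply dmem_power_coset.
Qed.

Hypothesis b_inverts_a : conjg T mul inv a b = a^-1.

Lemma center_cent2_sqr : center_cent2 (b ** b).
Proof.
  assert (ab : a ** b = b ** a^-1)
    by (rewrite <- b_inverts_a; unfold conjg; now rewrite !mulgA, mulgV, mul1g).
  assert (aVb : a^-1 ** b = b ** a).
  { apply (mulgI a). now rewrite mulgA, mulgV, mul1g, mulgA, ab, <- mulgA, mulVg, mulg1. }
  split; [|split].
  - now rewrite <- mulgA, <- aVb, mulgA, <- ab, <- mulgA.
  - now rewrite mulgA.
  - intros y _ yb. now rewrite <- mulgA, <- yb, mulgA, <- yb, <- mulgA.
Qed.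

Lemma inverting_two_element : finite_morley_rank M ->
  exists t N, t ^+ (2 ^ N) = one /\ conjg T mul inv a t = a^-1.
Proof.
  intros fmr. destruct (center_cent2_powers_stabilize fmr) as [k stable].
  destruct (stable ((b ** b) ^+ (2 ^ k))) as [z [Zz ez]].
  { exists (b ** b). split; [exact center_cent2_sqr|reflexivity]. }
  assert (ZzV : center_cent2 z^-1) by now apply center_cent2_subgroup.
  pose proof ZzV as [zVa [zVb _]].
  (* [(b z^-1)^(2^(k+1)) = (b^2)^(2^k) * (z^-1)^(2^(k+1)) = 1]. *)
  exists (b ** z^-1), (S k). split.
  - assert (tt : b ** z^-1 ** (b ** z^-1) = b ** b ** (z^-1 ** z^-1)).
    { now rewrite <- !mulgA, (mulgA z^-1), zVb, <- mulgA. }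
    rewrite expg2S, tt, expgMn, ez, <- expg2S, expgVn, mulgV; [reflexivity|].
    apply center_cent2_abelian; [exact center_cent2_sqr|now apply center_cent2_subgroup].
  - unfold conjg in *. rewrite invgM, invgK, <- !mulgA, (mulgA a), (mulgA b^-1), b_inverts_a.
    now rewrite (commuteV a z^-1 (eq_sym zVa)), mulgA, mulgV, mul1g.
Qed.

End Inversion.
End Group.

Theorem mainTheorem9 (T : Type) (mul : T -> T -> T) (inv : T -> T) (one : T) :
  is_group T mul inv one ->
  finite_morley_rank (GStruct T mul inv one) ->
  (forall S : T -> Prop, is_sylow2 T mul inv one S ->
     forall s, S s -> central T mul s) ->
  forall a b : T, conjg T mul inv a b = inv a -> mul a a = one.
Proof.
  intros HG fmr sylow2_central a b b_inverts_a.
  destruct (inverting_two_element T mul inv one HG a b b_inverts_a fmr)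
    as [t [N [t2 t_inverts_a]]].
  destruct (two_element_in_sylow2 T mul inv one HG t N t2) as [S [sylS St]].
  exact (sqr_eq1_inverted_by_central T mul inv one HG a t (sylow2_central S sylS t St) t_inverts_a).
Qed.
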